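(* Let $q\ge2$ be an integer, $1-\frac1{2q}<\gamma<1$, $p\in\{0,\dots,q-2\}$, and $a,b,c,d\ge0$ integers with $a+b=c+d=q-1-p$. Then there is a constant $C$ such that for all $N\ge1$, $$N^{4q-4}\sum_{i,i',k,k'=0}^{N-1}\langle\mathbf 1_{\Delta i},\mathbf 1_{\Delta i'}\rangle^{p+1}_{\mathcal H^\gamma}\langle\mathbf 1_{\Delta k},\mathbf 1_{\Delta k'}\rangle^{p+1}_{\mathcal H^\gamma}\langle\mathbf 1_{\Delta i},\mathbf 1_{\Delta k}\rangle^{a}_{\mathcal H^\gamma}\langle\mathbf 1_{\Delta i},\mathbf 1_{\Delta k'}\rangle^{b}_{\mathcal H^\gamma}\langle\mathbf 1_{\Delta i'},\mathbf 1_{\Delta k}\rangle^{c}_{\mathcal H^\gamma}\langle\mathbf 1_{\Delta i'},\mathbf 1_{\Delta k'}\rangle^{d}_{\mathcal H^\gamma}\le C.$$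
   Context: $\mathcal H^\gamma$ is the closure of step functions on $[0,1]$ under $\langle \mathbf 1_{[0,s_1]},\mathbf 1_{[0,s_2]}\rangle_{\mathcal H^\gamma}=\frac12(s_1^{2\gamma}+s_2^{2\gamma}-|s_1-s_2|^{2\gamma})$. $\Delta i=[\frac iN,\frac{i+1}N]$, so $\langle\mathbf 1_{\Delta i},\mathbf 1_{\Delta i'}\rangle_{\mathcal H^\gamma}=\frac12N^{-2\gamma}(|i-i'+1|^{2\gamma}+|i-i'-1|^{2\gamma}-2|i-i'|^{2\gamma})$. *)

From Stdlib Require Import Reals.
Open Scope R_scope.

Definition abspow (x e : R) : R :=
  if Req_EM_T x 0 then 0 else Rpower (Rabs x) e.

(* <1_{Delta i}, 1_{Delta i'}>_{H^gamma}, Delta i = [i/N,(i+1)/N]: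
   1/2 N^{-2gamma} (|i-i'+1|^{2gamma} + |i-i'-1|^{2gamma} - 2|i-i'|^{2gamma}) *)
Definition ipH (gamma : R) (N i i' : nat) : R :=
  let j := INR i - INR i' in
  / 2 * Rpower (INR N) (- (2 * gamma)) *
  (abspow (j + 1) (2 * gamma) + abspow (j - 1) (2 * gamma)
   - 2 * abspow j (2 * gamma)).

Fixpoint sumN (N : nat) (f : nat -> R) : R :=
  match N with
  | O => 0
  | S n => sumN n f + f n
  end.

(* Let [Z u v = |<1_{Δu}, 1_{Δv}>|^q].  The inner product is [N^(-2γ)/2] times the second
   difference of [|x|^(2γ)] at [u - v], which decays like [|u - v|^(2γ-2)]; since
   [(2 - 2γ) q < 1], every row of [Z] therefore sums to [O(N^(1-2q))].  The six exponents of
   the summand are at most [q] and add up to [2q], so bounding all factors but the largest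
   by the second largest dominates the summand by a sum of products [Z e * Z e'] over pairs
   of distinct edges of the complete graph on [{i, i', k, k'}].  In each such pair two
   indices are leaves and are summed out by row bounds, the other two contribute [N^2]:
   the quadruple sum is [O(N^2 * N^(2-4q)) = O(N^(4-4q))]. *)

From Stdlib Require Import Reals Lra Lia List RList.
Import ListNotations.
Open Scope R_scope.

Lemma sumN_ext (N : nat) (f g : nat -> R) :
  (forall i, (i < N)%nat -> f i = g i) -> sumN N f = sumN N g.
Proof.
  induction N as [|N IH]; intros H; simpl; [reflexivity|].
  rewrite IH by (intros; apply H; lia). rewrite H by lia. reflexivity.
Qed.

Lemma sumN_le (N : nat) (f g : nat -> R) :
  (forall i, (i < N)%nat -> f i <= g i) -> sumN N f <= sumN N g.
Proof.
  induction N as [|N IH]; intros H; simpl; [lra|].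
  apply Rplus_le_compat; [apply IH; intros; apply H|apply H]; lia.
Qed.

Lemma sumN_ge0 (N : nat) (f : nat -> R) :
  (forall i, (i < N)%nat -> 0 <= f i) -> 0 <= sumN N f.
Proof.
  intros H. replace 0 with (sumN N (fun _ => 0)).
  - apply sumN_le; exact H.
  - induction N; simpl; [reflexivity|]. rewrite IHN by (intros; apply H; lia). ring.
Qed.

Lemma sumN_add (N : nat) (f g : nat -> R) :
  sumN N (fun i => f i + g i) = sumN N f + sumN N g.
Proof. induction N; simpl; [ring|]. rewrite IHN; ring. Qed.

Lemma sumN_scal (N : nat) (c : R) (f : nat -> R) :
  sumN N (fun i => c * f i) = c * sumN N f.
Proof. induction N; simpl; [ring|]. rewrite IHN; ring. Qed.

Lemma sumN_const (N : nat) (c : R) : sumN N (fun _ => c) = INR N * c.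
Proof. induction N; simpl sumN; [simpl; ring|]. rewrite IHN, S_INR; ring. Qed.

Lemma sumN_comm (N M : nat) (f : nat -> nat -> R) :
  sumN N (fun i => sumN M (fun j => f i j)) = sumN M (fun j => sumN N (fun i => f i j)).
Proof.
  induction N; simpl.
  - induction M; simpl; [reflexivity|]. rewrite <- IHM; ring.
  - rewrite IHN, <- sumN_add. reflexivity.
Qed.

Lemma sumN_add_len (n m : nat) (f : nat -> R) :
  sumN (n + m) f = sumN n f + sumN m (fun j => f (n + j)%nat).
Proof.
  induction m; simpl.
  - rewrite Nat.add_0_r; ring.
  - rewrite Nat.add_succ_r; simpl. rewrite IHm; ring.
Qed.

Lemma sumN_succ_l (n : nat) (f : nat -> R) :
  sumN (S n) f = f O + sumN n (fun j => f (S j)).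
Proof. induction n; simpl in *; [ring|]. rewrite IHn; ring. Qed.

Lemma sumN_rev (n : nat) (f : nat -> R) :
  sumN n (fun u => f (n - 1 - u)%nat) = sumN n f.
Proof.
  revert f; induction n; intros f; [reflexivity|].
  rewrite (sumN_succ_l n f), <- (IHn (fun w => f (S w))). simpl sumN.
  replace (n - 0 - n)%nat with O by lia.
  rewrite (sumN_ext n (fun u => f (n - 0 - u)%nat) (fun u => f (S (n - 1 - u)))).
  - ring.
  - intros u Hu. f_equal. lia.
Qed.

Lemma sumN_le_len (n m : nat) (f : nat -> R) :
  (forall i, 0 <= f i) -> (n <= m)%nat -> sumN n f <= sumN m f.
Proof. intros H Hnm. induction Hnm; [lra|]. simpl. specialize (H m). lra. Qed.

Definition sum4 (N : nat) (h : nat -> nat -> nat -> nat -> R) : R :=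
  sumN N (fun a => sumN N (fun b => sumN N (fun c => sumN N (fun d => h a b c d)))).

Lemma sum4_le (N : nat) (h h' : nat -> nat -> nat -> nat -> R) :
  (forall a b c d, h a b c d <= h' a b c d) -> sum4 N h <= sum4 N h'.
Proof. intros H. do 4 (apply sumN_le; intros ? _). apply H. Qed.

Lemma sum4_ext (N : nat) (h h' : nat -> nat -> nat -> nat -> R) :
  (forall a b c d, h a b c d = h' a b c d) -> sum4 N h = sum4 N h'.
Proof. intros H. do 4 (apply sumN_ext; intros ? _). apply H. Qed.

Lemma sum4_add (N : nat) (f g : nat -> nat -> nat -> nat -> R) :
  sum4 N (fun a b c d => f a b c d + g a b c d) = sum4 N f + sum4 N g.
Proof.
  unfold sum4. rewrite <- sumN_add. do 3 (apply sumN_ext; intros ? _; rewrite <- sumN_add).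
  reflexivity.
Qed.

Lemma sum4_swap23 (N : nat) (h : nat -> nat -> nat -> nat -> R) :
  sum4 N h = sum4 N (fun a b c d => h a c b d).
Proof. apply sumN_ext; intros a _. apply sumN_comm. Qed.

Lemma sum4_swap34 (N : nat) (h : nat -> nat -> nat -> nat -> R) :
  sum4 N h = sum4 N (fun a b c d => h a b d c).
Proof. do 2 (apply sumN_ext; intros ? _). apply sumN_comm. Qed.

Lemma pow_prod_le_dominant (q mx m2 m3 m4 m5 m6 : nat) (x y2 y3 y4 y5 y6 : R) :
  0 <= y2 <= x -> 0 <= y3 <= x -> 0 <= y4 <= x -> 0 <= y5 <= x -> 0 <= y6 <= x ->
  (mx <= q)%nat -> (mx + m2 + m3 + m4 + m5 + m6 = 2 * q)%nat ->
  x ^ mx * y2 ^ m2 * y3 ^ m3 * y4 ^ m4 * y5 ^ m5 * y6 ^ m6 <=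
  x ^ q * (y2 ^ q + y3 ^ q + y4 ^ q + y5 ^ q + y6 ^ q).
Proof.
  intros H2 H3 H4 H5 H6 Hmx Hm.
  pose proof (pow_le y2 q) as P2; pose proof (pow_le y3 q) as P3;
  pose proof (pow_le y4 q) as P4; pose proof (pow_le y5 q) as P5;
  pose proof (pow_le y6 q) as P6.
  set (B := MaxRlist [y2; y3; y4; y5; y6]).
  assert (B_in : In B [y2; y3; y4; y5; y6])
    by (apply MaxRlist_P2; exists y2; left; reflexivity).
  assert (B_max : forall y, In y [y2; y3; y4; y5; y6] -> y <= B)
    by (intros; apply MaxRlist_P1; assumption).
  assert (B_x : 0 <= B <= x /\ B ^ q <= y2 ^ q + y3 ^ q + y4 ^ q + y5 ^ q + y6 ^ q).
  { simpl in B_in. destruct B_in as [<-|[<-|[<-|[<-|[<-|[]]]]]]; lra. }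
  destruct B_x as [B_x Bq].
  assert (Hys : y2 ^ m2 * y3 ^ m3 * y4 ^ m4 * y5 ^ m5 * y6 ^ m6 <= B ^ (q - mx) * B ^ q).
  { rewrite <- pow_add. replace (q - mx + q)%nat with (m2 + m3 + m4 + m5 + m6)%nat by lia.
    rewrite !pow_add.
    repeat apply Rmult_le_compat;
      try (apply pow_incr; split; [lra|apply B_max; simpl; tauto]);
      repeat apply Rmult_le_pos; apply pow_le; lra. }
  rewrite !Rmult_assoc.
  apply Rle_trans with (x ^ mx * (B ^ (q - mx) * B ^ q)).
  { apply Rmult_le_compat_l; [apply pow_le; lra|]. rewrite <- !Rmult_assoc. exact Hys. }
  replace (x ^ q) with (x ^ mx * x ^ (q - mx)) by (rewrite <- pow_add; f_equal; lia).
  rewrite <- Rmult_assoc, (Rmult_assoc (x ^ mx)), Rmult_assoc.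
  apply Rmult_le_compat_l; [apply pow_le; lra|].
  apply Rmult_le_compat; try (apply pow_le; lra); [apply pow_incr; lra|exact Bq].
Qed.

Definition pair_sum6 (y1 y2 y3 y4 y5 y6 : R) : R :=
  y1 * y2 + y1 * y3 + y1 * y4 + y1 * y5 + y1 * y6 + y2 * y3 + y2 * y4 + y2 * y5 +
  y2 * y6 + y3 * y4 + y3 * y5 + y3 * y6 + y4 * y5 + y4 * y6 + y5 * y6.

Lemma pow_prod6_le_pair_sum6 (q m1 m2 m3 m4 m5 m6 : nat) (y1 y2 y3 y4 y5 y6 : R) :
  0 <= y1 -> 0 <= y2 -> 0 <= y3 -> 0 <= y4 -> 0 <= y5 -> 0 <= y6 ->
  (m1 <= q)%nat -> (m2 <= q)%nat -> (m3 <= q)%nat ->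
  (m4 <= q)%nat -> (m5 <= q)%nat -> (m6 <= q)%nat ->
  (m1 + m2 + m3 + m4 + m5 + m6 = 2 * q)%nat ->
  y1 ^ m1 * y2 ^ m2 * y3 ^ m3 * y4 ^ m4 * y5 ^ m5 * y6 ^ m6 <=
  pair_sum6 (y1 ^ q) (y2 ^ q) (y3 ^ q) (y4 ^ q) (y5 ^ q) (y6 ^ q).
Proof.
  intros H1 H2 H3 H4 H5 H6 **.
  pose proof (pow_le y1 q H1); pose proof (pow_le y2 q H2); pose proof (pow_le y3 q H3);
  pose proof (pow_le y4 q H4); pose proof (pow_le y5 q H5); pose proof (pow_le y6 q H6).
  pose proof (MaxRlist_P2 [y1; y2; y3; y4; y5; y6] (ex_intro _ y1 (or_introl eq_refl))) as M_in.
  pose proof (MaxRlist_P1 [y1; y2; y3; y4; y5; y6]) as M_max.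
  generalize dependent (MaxRlist [y1; y2; y3; y4; y5; y6]). intros M M_in M_max.
  unfold pair_sum6.
  destruct M_in as [<-|[<-|[<-|[<-|[<-|[<-|[]]]]]]]; simpl in M_max.
  - enough (y1^m1*y2^m2*y3^m3*y4^m4*y5^m5*y6^m6 <= y1^q*(y2^q+y3^q+y4^q+y5^q+y6^q)) by nra.
    apply pow_prod_le_dominant; try split; try apply M_max; tauto || lia.
  - enough (y2^m2*y1^m1*y3^m3*y4^m4*y5^m5*y6^m6 <= y2^q*(y1^q+y3^q+y4^q+y5^q+y6^q)) by nra.
    apply pow_prod_le_dominant; try split; try apply M_max; tauto || lia.
  - enough (y3^m3*y1^m1*y2^m2*y4^m4*y5^m5*y6^m6 <= y3^q*(y1^q+y2^q+y4^q+y5^q+y6^q)) by nra.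
    apply pow_prod_le_dominant; try split; try apply M_max; tauto || lia.
  - enough (y4^m4*y1^m1*y2^m2*y3^m3*y5^m5*y6^m6 <= y4^q*(y1^q+y2^q+y3^q+y5^q+y6^q)) by nra.
    apply pow_prod_le_dominant; try split; try apply M_max; tauto || lia.
  - enough (y5^m5*y1^m1*y2^m2*y3^m3*y4^m4*y6^m6 <= y5^q*(y1^q+y2^q+y3^q+y4^q+y6^q)) by nra.
    apply pow_prod_le_dominant; try split; try apply M_max; tauto || lia.
  - enough (y6^m6*y1^m1*y2^m2*y3^m3*y4^m4*y5^m5 <= y6^q*(y1^q+y2^q+y3^q+y4^q+y5^q)) by nra.
    apply pow_prod_le_dominant; try split; try apply M_max; tauto || lia.
Qed.

Section RowBoundedKernel.

Variables (N : nat) (Z : nat -> nat -> R) (T : R).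
Hypothesis Z_ge0 : forall u v, 0 <= Z u v.
Hypothesis Z_sym : forall u v, Z u v = Z v u.
Hypothesis Z_row : forall u, (u < N)%nat -> sumN N (Z u) <= T.

(* [c] and [d] are leaves: summing out [d], then [c], costs one row bound each. *)
Lemma sum4_two_leaves_le (f : nat -> nat -> nat) (g : nat -> nat -> nat -> nat) :
  (forall a b, (a < N)%nat -> (b < N)%nat -> (f a b < N)%nat) ->
  (forall a b c, (a < N)%nat -> (b < N)%nat -> (c < N)%nat -> (g a b c < N)%nat) ->
  sum4 N (fun a b c d => Z (f a b) c * Z (g a b c) d) <= INR N ^ 2 * T ^ 2.
Proof.
  intros Hf Hg. replace (INR N ^ 2 * T ^ 2) with (sumN N (fun _ => sumN N (fun _ => T * T))).
  2: { rewrite !sumN_const. ring. }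
  apply sumN_le; intros a Ha; apply sumN_le; intros b Hb.
  assert (T_ge0 : 0 <= T).
  { eapply Rle_trans; [apply sumN_ge0; intros; apply Z_ge0|apply (Z_row a Ha)]. }
  apply Rle_trans with (sumN N (fun c => Z (f a b) c * T)).
  - apply sumN_le; intros c Hc. rewrite sumN_scal.
    apply Rmult_le_compat_l; [apply Z_ge0|apply Z_row, Hg; assumption].
  - rewrite (sumN_ext _ _ (fun c => T * Z (f a b) c)) by (intros; ring).
    rewrite sumN_scal.
    apply Rmult_le_compat_l; [assumption|apply Z_row, Hf; assumption].
Qed.

Local Tactic Notation "leaves" uconstr(f) uconstr(g) :=
  apply (sum4_two_leaves_le f g); intros; assumption.

(* Each of the 15 terms is a pair of edges of the complete graph on [a b c d]; relabelling
   the summation variables brings it into the two-leaves shape. *)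
Lemma sum4_pair_sum6_le :
  sum4 N (fun a b c d => pair_sum6 (Z a b) (Z c d) (Z a c) (Z a d) (Z b c) (Z b d))
  <= 15 * (INR N ^ 2 * T ^ 2).
Proof.
  unfold pair_sum6. rewrite !sum4_add.
  set (B := INR N ^ 2 * T ^ 2).
  replace (15 * B) with (B + B + B + B + B + B + B + B + B + B + B + B + B + B + B) by ring.
  repeat apply Rplus_le_compat.
  - rewrite sum4_swap23. leaves (fun a _ => a) (fun _ b _ => b).
  - rewrite sum4_swap34, sum4_swap23. leaves (fun a _ => a) (fun a _ _ => a).
  - rewrite sum4_swap23. leaves (fun a _ => a) (fun a _ _ => a).
  - rewrite sum4_swap34, sum4_swap23. leaves (fun a _ => a) (fun _ _ c => c).
  - rewrite sum4_swap23. leaves (fun a _ => a) (fun _ _ c => c).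
  - rewrite (sum4_ext _ _ (fun a b c d => Z a c * Z c d)) by (intros; ring).
    leaves (fun a _ => a) (fun _ _ c => c).
  - rewrite sum4_swap34, (sum4_ext _ _ (fun a b c d => Z a c * Z c d))
      by (intros; rewrite (Z_sym d c); ring).
    leaves (fun a _ => a) (fun _ _ c => c).
  - rewrite (sum4_ext _ _ (fun a b c d => Z b c * Z c d)) by (intros; ring).
    leaves (fun _ b => b) (fun _ _ c => c).
  - rewrite sum4_swap34, (sum4_ext _ _ (fun a b c d => Z b c * Z c d))
      by (intros; rewrite (Z_sym d c); ring).
    leaves (fun _ b => b) (fun _ _ c => c).
  - leaves (fun a _ => a) (fun a _ _ => a).
  - rewrite sum4_swap23, (sum4_ext _ _ (fun a b c d => Z a b * Z b c))
      by (intros; rewrite (Z_sym c b); ring).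
    rewrite sum4_swap34, sum4_swap23. leaves (fun a _ => a) (fun _ _ c => c).
  - leaves (fun a _ => a) (fun _ b _ => b).
  - rewrite (sum4_ext _ _ (fun a b c d => Z b c * Z a d)) by (intros; ring).
    leaves (fun _ b => b) (fun a _ _ => a).
  - rewrite sum4_swap23, sum4_swap34, (sum4_ext _ _ (fun a b c d => Z a c * Z c d))
      by (intros; rewrite (Z_sym d c); ring).
    leaves (fun a _ => a) (fun _ _ c => c).
  - leaves (fun _ b => b) (fun _ b _ => b).
Qed.
End RowBoundedKernel.

Lemma Rpower_pos (x y : R) : 0 < Rpower x y.
Proof. apply exp_pos. Qed.

Lemma Rpower_1_l (y : R) : Rpower 1 y = 1.
Proof. unfold Rpower. rewrite ln_1, Rmult_0_r. apply exp_0. Qed.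

Lemma Rpower_le_nonpos (a b y : R) : 0 < a <= b -> y <= 0 -> Rpower b y <= Rpower a y.
Proof.
  intros Hab Hy. rewrite <- (Ropp_involutive y), !(Rpower_Ropp _ (- y)).
  apply Rinv_le_contravar; [apply Rpower_pos|]. apply Rle_Rpower_l; lra.
Qed.

Lemma Rpower_pow_l (x y : R) (n : nat) : 0 < x -> Rpower x y ^ n = Rpower x (y * INR n).
Proof. intros Hx. rewrite <- Rpower_pow by apply Rpower_pos. apply Rpower_mult. Qed.

Lemma abspow_opp (x e : R) : abspow (- x) e = abspow x e.
Proof.
  unfold abspow. destruct (Req_EM_T (- x) 0), (Req_EM_T x 0); try lra.
  rewrite Rabs_Ropp. reflexivity.
Qed.

Lemma abspow_pos (x e : R) : 0 < x -> abspow x e = Rpower x e.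
Proof.
  intros Hx. unfold abspow. destruct (Req_EM_T x 0); [lra|].
  rewrite Rabs_pos_eq by lra. reflexivity.
Qed.

Lemma abspow_0 (e : R) : abspow 0 e = 0.
Proof. unfold abspow. destruct (Req_EM_T 0 0); [reflexivity|lra]. Qed.

Definition d2pow (s x : R) : R := abspow (x + 1) s + abspow (x - 1) s - 2 * abspow x s.

Lemma d2pow_opp (s x : R) : d2pow s (- x) = d2pow s x.
Proof.
  unfold d2pow. replace (- x + 1) with (- (x - 1)) by ring.
  replace (- x - 1) with (- (x + 1)) by ring. rewrite !abspow_opp. ring.
Qed.

Lemma ipH_d2pow (gamma : R) (N i j : nat) :
  ipH gamma N i j = / 2 * Rpower (INR N) (- (2 * gamma)) * d2pow (2 * gamma) (INR i - INR j).
Proof. reflexivity. Qed.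

Lemma ipH_sym (gamma : R) (N i j : nat) : ipH gamma N i j = ipH gamma N j i.
Proof.
  rewrite !ipH_d2pow. replace (INR i - INR j) with (- (INR j - INR i)) by ring.
  rewrite d2pow_opp. reflexivity.
Qed.

Lemma Rpower_second_diff_bounds (s x : R) : 1 < s < 2 -> 2 <= x ->
  0 <= Rpower (x + 1) s + Rpower (x - 1) s - 2 * Rpower x s <= s * (s - 1) * Rpower (x - 1) (s - 2).
Proof.
  (* Two mean value theorems give [s (s - 1) e ^ (s - 2)] with [x - 1 < e < x + 1]. *)
  intros Hs Hx.
  destruct (MVT_cor2 (fun t => Rpower (t + 1) s - Rpower t s)
              (fun t => s * Rpower (t + 1) (s - 1) - s * Rpower t (s - 1)) (x - 1) x)
    as [c [Hc Hc_in]]; [lra| |].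
  { intros c Hc_in.
    apply (derivable_pt_lim_minus (fun t => Rpower (t + 1) s) (fun t => Rpower t s));
      [|apply derivable_pt_lim_power; lra].
    replace (s * Rpower (c + 1) (s - 1)) with (s * Rpower (c + 1) (s - 1) * (1 + 0)) by ring.
    apply (derivable_pt_lim_comp (fun t => t + 1) (fun t => Rpower t s)).
    - apply (derivable_pt_lim_plus id (fct_cte 1));
        [apply derivable_pt_lim_id|apply derivable_pt_lim_const].
    - apply derivable_pt_lim_power. lra. }
  destruct (MVT_cor2 (fun t => Rpower t (s - 1)) (fun t => (s - 1) * Rpower t (s - 1 - 1))
              c (c + 1)) as [e [He He_in]]; [lra|intros; apply derivable_pt_lim_power; lra|].
  cbv beta in Hc, He.
  replace (x - 1 + 1) with x in Hc by ring.
  replace (s - 1 - 1) with (s - 2) in He by ring.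
  replace (x - (x - 1)) with 1 in Hc by ring. replace (c + 1 - c) with 1 in He by ring.
  replace (Rpower (x + 1) s + Rpower (x - 1) s - 2 * Rpower x s)
    with (s * (Rpower (c + 1) (s - 1) - Rpower c (s - 1))) by lra.
  rewrite He, Rmult_1_r, <- Rmult_assoc.
  assert (0 < Rpower e (s - 2)) by apply Rpower_pos.
  assert (Rpower e (s - 2) <= Rpower (x - 1) (s - 2)) by (apply Rpower_le_nonpos; lra).
  assert (0 < s * (s - 1)) by nra.
  split; [apply Rmult_le_pos|apply Rmult_le_compat_l]; lra.
Qed.

Lemma Rpower_shift_le (x y : R) : 2 <= x -> -1 <= y <= 0 ->
  Rpower (x - 1) y <= 3 * Rpower (x + 1) y.
Proof.
  intros Hx Hy.
  assert (H3 : Rpower 3 (- y) <= 3).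
  { rewrite <- (Rpower_1 3) at 2 by lra. apply Rle_Rpower; lra. }
  assert (Hmul : Rpower 3 y * Rpower (x - 1) y <= Rpower (x + 1) y).
  { rewrite Rpower_mult_distr by lra. apply Rpower_le_nonpos; lra. }
  assert (Hinv : Rpower 3 (- y) * Rpower 3 y = 1).
  { rewrite <- Rpower_plus, Rplus_opp_l. apply Rpower_O. lra. }
  pose proof (Rpower_pos 3 (- y)); pose proof (Rpower_pos (x + 1) y).
  apply Rle_trans with (Rpower 3 (- y) * Rpower (x + 1) y); [|apply Rmult_le_compat_r; lra].
  replace (Rpower (x - 1) y) with (Rpower 3 (- y) * (Rpower 3 y * Rpower (x - 1) y))
    by (rewrite <- Rmult_assoc, Hinv; ring).
  apply Rmult_le_compat_l; lra.
Qed.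

Lemma d2pow_abs_le (s : R) (n : nat) : 1 < s < 2 ->
  Rabs (d2pow s (INR n)) <= 6 * Rpower (INR n + 1) (s - 2).
Proof.
  intros Hs. destruct n as [|[|n]].
  - unfold d2pow. simpl INR. rewrite Rplus_0_l, Rpower_1_l.
    replace (0 - 1) with (Ropp 1) by ring.
    rewrite abspow_opp, abspow_0, abspow_pos, Rpower_1_l by lra.
    rewrite Rabs_pos_eq; lra.
  - unfold d2pow. simpl INR. replace (1 - 1) with 0 by ring. replace (1 + 1) with 2 by ring.
    rewrite abspow_0, !abspow_pos, Rpower_1_l by lra.
    assert (H4 : Rpower 2 s <= 4).
    { replace 4 with (Rpower 2 (INR 2)) by (rewrite Rpower_pow by lra; ring).
      apply Rle_Rpower; simpl; lra. }
    assert (Hhalf : / 2 <= Rpower 2 (s - 2)).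
    { rewrite <- (Rpower_1 2) at 1 by lra. rewrite <- Rpower_Ropp. apply Rle_Rpower; lra. }
    pose proof (Rpower_pos 2 s). apply Rabs_le; lra.
  - set (x := INR (S (S n))).
    assert (Hx : 2 <= x) by (unfold x; rewrite !S_INR; pose proof (pos_INR n); lra).
    pose proof (Rpower_second_diff_bounds s x Hs Hx) as [Hlo Hhi].
    pose proof (Rpower_shift_le x (s - 2) Hx ltac:(lra)).
    assert (s * (s - 1) < 2) by nra.
    pose proof (Rpower_pos (x - 1) (s - 2)).
    unfold d2pow. rewrite !abspow_pos by lra. rewrite Rabs_pos_eq by lra. nra.
Qed.

Lemma sumN_even_diff_le (F : R -> R) (G : nat -> R) (N v : nat) :
  (forall x, F (- x) = F x) -> (forall n, 0 <= G n) -> (forall n, F (INR n) <= G n) ->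
  (v < N)%nat -> sumN N (fun u => F (INR u - INR v)) <= 2 * sumN N G.
Proof.
  intros F_even G_ge0 FG Hv.
  replace N with (v + (N - v))%nat at 1 by lia. rewrite sumN_add_len.
  assert (above : sumN (N - v) (fun j => F (INR (v + j) - INR v)) <= sumN N G).
  { apply Rle_trans with (sumN (N - v) G); [|apply sumN_le_len; [assumption|lia]].
    apply sumN_le; intros j _. rewrite plus_INR.
    replace (INR v + INR j - INR v) with (INR j) by ring. apply FG. }
  assert (below : sumN v (fun u => F (INR u - INR v)) <= sumN N G).
  { rewrite <- sumN_rev.
    apply Rle_trans with (sumN v (fun u => G (S u))).
    - apply sumN_le; intros u Hu.
      replace (INR (v - 1 - u) - INR v) with (- INR (S u))
        by (rewrite !minus_INR, S_INR by lia; simpl; ring).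
      rewrite F_even. apply FG.
    - apply Rle_trans with (sumN (S v) G); [|apply sumN_le_len; [assumption|lia]].
      rewrite sumN_succ_l. specialize (G_ge0 O). lra. }
  lra.
Qed.

Lemma sumN_Rpower_le (beta : R) (N : nat) : 0 <= beta < 1 -> (1 <= N)%nat ->
  sumN N (fun m => Rpower (INR m + 1) (- beta)) <= Rpower (INR N) (1 - beta) / (1 - beta).
Proof.
  intros Hb HN. induction HN as [|N HN IH].
  - simpl. rewrite !Rplus_0_l, !Rpower_1_l. unfold Rdiv. rewrite Rmult_1_l.
    rewrite <- Rinv_1 at 1. apply Rinv_le_contravar; lra.
  - assert (HN1 : 1 <= INR N) by (apply (le_INR 1); assumption).
    destruct (MVT_cor2 (fun t => Rpower t (1 - beta))
                (fun t => (1 - beta) * Rpower t (1 - beta - 1)) (INR N) (INR N + 1))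
      as [c [Hc Hc_in]];
      [lra|intros; apply derivable_pt_lim_power; lra|].
    cbv beta in Hc. replace (1 - beta - 1) with (- beta) in Hc by ring.
    replace (INR N + 1 - INR N) with 1 in Hc by ring.
    assert (Rpower (INR N + 1) (- beta) <= Rpower c (- beta)) by (apply Rpower_le_nonpos; lra).
    assert (Rpower (INR N + 1) (1 - beta) / (1 - beta) =
            Rpower (INR N) (1 - beta) / (1 - beta) + Rpower c (- beta)).
    { apply (Rmult_eq_reg_r (1 - beta)); [|lra]. unfold Rdiv.
      rewrite Rmult_plus_distr_r, !Rmult_assoc, Rinv_l by lra. lra. }
    simpl sumN. rewrite S_INR. lra.
Qed.

Lemma ipH_row_sum_le (gamma : R) (q N u : nat) :
  1 / 2 < gamma < 1 -> (2 - 2 * gamma) * INR q < 1 -> (u < N)%nat ->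
  sumN N (fun v => Rabs (ipH gamma N u v) ^ q) <=
  2 * 3 ^ q / (1 - (2 - 2 * gamma) * INR q) * Rpower (INR N) (1 - 2 * INR q).
Proof.
  intros Hg Hbeta Hu.
  set (beta := (2 - 2 * gamma) * INR q) in *.
  assert (beta_ge0 : 0 <= beta) by (pose proof (pos_INR q); unfold beta; nra).
  assert (HN : 0 < INR N) by (apply lt_0_INR; lia).
  set (F := fun x => Rabs (d2pow (2 * gamma) x) ^ q).
  set (scale := (/ 2) ^ q * Rpower (INR N) (- (2 * gamma) * INR q)).
  assert (scale_ge0 : 0 <= scale)
    by (unfold scale; apply Rmult_le_pos; [apply pow_le; lra|left; apply Rpower_pos]).
  rewrite (sumN_ext N _ (fun v => scale * F (INR v - INR u))).
  2: { intros v _. rewrite ipH_sym, ipH_d2pow. unfold scale, F.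
       rewrite !Rabs_mult, (Rabs_pos_eq (/ 2)), (Rabs_pos_eq (Rpower _ _)), !Rpow_mult_distr,
         Rpower_pow_l by (lra || apply Rlt_le, Rpower_pos). reflexivity. }
  rewrite sumN_scal.
  assert (HF : sumN N (fun v => F (INR v - INR u)) <=
               2 * (6 ^ q * (Rpower (INR N) (1 - beta) / (1 - beta)))).
  { eapply Rle_trans.
    - apply (sumN_even_diff_le F (fun n => 6 ^ q * Rpower (INR n + 1) (- beta)));
        [intros x; unfold F; rewrite d2pow_opp; reflexivity
        |intros n; apply Rmult_le_pos; [apply pow_le; lra|left; apply Rpower_pos]
        |intros n|exact Hu].
      unfold F. replace (- beta) with ((2 * gamma - 2) * INR q) by (unfold beta; ring).
      rewrite <- Rpower_pow_l, <- Rpow_mult_distr by (pose proof (pos_INR n); lra).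
      apply pow_incr. split; [apply Rabs_pos|apply d2pow_abs_le; lra].
    - rewrite sumN_scal. apply Rmult_le_compat_l; [lra|].
      apply Rmult_le_compat_l; [apply pow_le; lra|].
      apply sumN_Rpower_le; [lra|lia]. }
  apply Rle_trans with (scale * (2 * (6 ^ q * (Rpower (INR N) (1 - beta) / (1 - beta))))).
  { apply Rmult_le_compat_l; assumption. }
  right. unfold scale, Rdiv.
  replace (Rpower (INR N) (1 - 2 * INR q))
    with (Rpower (INR N) (- (2 * gamma) * INR q) * Rpower (INR N) (1 - beta))
    by (rewrite <- Rpower_plus; f_equal; unfold beta; ring).
  replace (3 ^ q) with ((/ 2) ^ q * 6 ^ q) by (rewrite <- Rpow_mult_distr; f_equal; field).
  ring.
Qed.

Lemma pow_Rpower_cancel (x : R) (q : nat) : 0 < x -> (1 <= q)%nat ->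
  x ^ (4 * q - 4) * (x ^ 2 * Rpower x (1 - 2 * INR q) ^ 2) = 1.
Proof.
  intros Hx Hq.
  rewrite <- !Rpower_pow, Rpower_pow_l, <- !Rpower_plus by assumption.
  rewrite minus_INR, mult_INR by lia.
  transitivity (Rpower x 0); [f_equal; simpl; ring|apply Rpower_O, Hx].
Qed.

Theorem mainTheorem8 (q : nat) (gamma : R) (p a b c d : nat)
  (hq : (2 <= q)%nat)
  (hg1 : 1 - / (2 * INR q) < gamma) (hg2 : gamma < 1)
  (hp : (p <= q - 2)%nat)
  (hab : (a + b = q - 1 - p)%nat) (hcd : (c + d = q - 1 - p)%nat) :
  exists C : R, forall N : nat, (1 <= N)%nat ->
    INR N ^ (4 * q - 4) *
    sumN N (fun i => sumN N (fun i' => sumN N (fun k => sumN N (fun k' =>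
      ipH gamma N i i' ^ (p + 1) * ipH gamma N k k' ^ (p + 1) *
      ipH gamma N i k ^ a * ipH gamma N i k' ^ b *
      ipH gamma N i' k ^ c * ipH gamma N i' k' ^ d)))) <= C.
Proof.
  assert (Hq : 2 <= INR q) by (apply (le_INR 2); assumption).
  assert (Hinv : / (2 * INR q) * (2 * INR q) = 1) by (field; lra).
  assert (/ (2 * INR q) <= / 4) by (apply Rinv_le_contravar; lra).
  assert (Hgamma : 1 / 2 < gamma < 1) by lra.
  assert (Hbeta : (2 - 2 * gamma) * INR q < 1) by nra.
  set (K := 2 * 3 ^ q / (1 - (2 - 2 * gamma) * INR q)).
  exists (15 * K ^ 2). intros N HN.
  assert (HN0 : 0 < INR N) by (apply lt_0_INR; lia).
  set (Z := fun u v => Rabs (ipH gamma N u v) ^ q).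
  set (T := K * Rpower (INR N) (1 - 2 * INR q)).
  apply Rle_trans with (INR N ^ (4 * q - 4) * (15 * (INR N ^ 2 * T ^ 2))).
  - apply Rmult_le_compat_l; [apply pow_le; lra|].
    apply Rle_trans with
      (sum4 N (fun a b c d => pair_sum6 (Z a b) (Z c d) (Z a c) (Z a d) (Z b c) (Z b d))).
    + apply sum4_le. intros i i' k k'. eapply Rle_trans; [apply Rle_abs|].
      rewrite !Rabs_mult, <- !RPow_abs.
      apply pow_prod6_le_pair_sum6; try apply Rabs_pos; lia.
    + apply sum4_pair_sum6_le.
      * intros u v. apply pow_le, Rabs_pos.
      * intros u v. unfold Z. rewrite ipH_sym. reflexivity.
      * intros u Hu. apply ipH_row_sum_le; assumption.
  - right. unfold T.
    transitivity (15 * K ^ 2 * (INR N ^ (4 * q - 4) *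
                   (INR N ^ 2 * Rpower (INR N) (1 - 2 * INR q) ^ 2))); [ring|].
    rewrite pow_Rpower_cancel by (assumption || lia). ring.
Qed.
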